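(* Let $V\subset\mathbb{R}^d$ be the closure of a bounded domain. There exists a constant $C>0$ such that for all $\rho^i=h_i\delta_{\gamma_i}\in\mathscr{C}_V$, $i=1,2$, $$\frac1C\,H^2(\rho^1,\rho^2)\le d_F(\rho^1,\rho^2)\le C\sqrt{h_1+h_2}\,H(\rho^1,\rho^2).$$ In particular $H$ and $d_F$ induce the same topology on $\mathscr{C}_V$.
   Context: $\mathscr{C}_V:=\{h\delta_\gamma\in\mathcal{M}(V):h\ge0,\ \gamma\in V\}$. The flat distance is $d_F(\rho^1,\rho^2):=\sup\{\int_V\varphi\,d(\rho^1-\rho^2):\varphi\in C(V),\ \|\varphi\|_\infty\le1,\ \mathrm{Lip}(\varphi)\le1\}$. The Hellinger–Kantorovich distance $H\ge0$ on $\mathscr{C}_V$ is given by $$H^2(\rho^1,\rho^2)=\begin{cases}h_1+h_2-2\sqrt{h_1h_2}\cos(|\gamma_1-\gamma_2|)&\text{if }|\gamma_1-\gamma_2|\le\pi,\\ h_1+h_2+2\sqrt{h_1h_2}&\text{otherwise.}\end{cases}$$ *)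

From HB Require Import structures.
From mathcomp Require Import all_boot all_order all_algebra.
From mathcomp Require Import all_classical all_reals all_analysis.
Set Implicit Arguments. Unset Strict Implicit. Unset Printing Implicit Defensive.
Import Order.TTheory GRing.Theory Num.Theory.
Import numFieldNormedType.Exports.
Local Open Scope classical_set_scope.
Local Open Scope ring_scope.

Definition eucl {R : realType} {d : nat} (x : 'rV[R]_d) : R :=
  Num.sqrt (\sum_(i < d) x ord0 i ^+ 2).

Definition closure_of_bounded_domain {R : realType} {d : nat}
    (V : set 'rV[R]_d) : Prop :=
  exists Om : set 'rV[R]_d,
    [/\ Om !=set0, open Om, connected Om, bounded_set Om & V = closure Om].

(* An element h delta_gamma of C_V is represented by the pair (h, gamma)
   with h >= 0 and gamma in V. *)
Definition inCV {R : realType} {d : nat} (V : set 'rV[R]_d)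
    (p : R * 'rV[R]_d) : Prop := 0 <= p.1 /\ V p.2.

Definition flat_test {R : realType} {d : nat} (V : set 'rV[R]_d)
    (phi : 'rV[R]_d -> R) : Prop :=
  [/\ {within V, continuous phi},
      (forall x, V x -> `|phi x| <= 1) &
      (forall x y, V x -> V y -> `|phi x - phi y| <= eucl (x - y))].

(* d_F(h1 delta_g1, h2 delta_g2) = sup_phi int phi d(rho1 - rho2)
   = sup_phi (h1 phi(g1) - h2 phi(g2)). *)
Definition flat_dist {R : realType} {d : nat} (V : set 'rV[R]_d)
    (p1 p2 : R * 'rV[R]_d) : R :=
  sup [set r | exists phi, flat_test V phi /\
                 r = p1.1 * phi p1.2 - p2.1 * phi p2.2].

Definition HK2 {R : realType} {d : nat} (p1 p2 : R * 'rV[R]_d) : R :=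
  let h1 := p1.1 in let h2 := p2.1 in
  let r := eucl (p1.2 - p2.2) in
  if r <= pi then h1 + h2 - 2 * Num.sqrt (h1 * h2) * cos r
  else h1 + h2 + 2 * Num.sqrt (h1 * h2).

Definition HK {R : realType} {d : nat} (p1 p2 : R * 'rV[R]_d) : R :=
  Num.sqrt (HK2 p1 p2).

Definition open_in_CV {R : realType} {d : nat} (V : set 'rV[R]_d)
    (D : R * 'rV[R]_d -> R * 'rV[R]_d -> R) (U : set (R * 'rV[R]_d)) : Prop :=
  U `<=` inCV V /\
  forall p, U p -> exists2 e : R, 0 < e &
    forall q, inCV V q -> D p q < e -> U q.

From HB Require Import structures.
From mathcomp Require Import all_boot all_order all_algebra.
From mathcomp Require Import all_classical all_reals all_analysis.
From mathcomp Require Import ring lra.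
Import Order.TTheory GRing.Theory Num.Theory.
Import numFieldNormedType.Exports.
Local Open Scope classical_set_scope.
Local Open Scope ring_scope.

(* Writing a = sqrt h1, b = sqrt h2 and r = |gamma1 - gamma2|, H^2 is the
   explicit function hk2 a b r, and d_F is a supremum of test values
   h1 phi(gamma1) - h2 phi(gamma2) over 1-bounded 1-Lipschitz phi.
   - Lower bound: the test functions +-1 and +-min(1, |x - gamma_i|) give
     |h1 - h2| <= d_F and h_i min(1, r) <= d_F; elementary bounds on
     1 - cos r (obtained from Taylor inequalities proved by monotonicity)
     turn these into H^2 <= 5 d_F.
   - Upper bound: each test value splits into a mass defect, controlled by
     |a - b| <= H, and a transport term b^2 r, controlled through
     a b r^2 <= 9 H^2; this gives d_F <= 5 sqrt (h1 + h2) H.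
   Both constants are universal, so no property of V is needed. The
   topologies agree because each inequality makes small balls of one
   distance lie inside balls of the other (masses being locally bounded
   for H). *)

Section TrigBounds.
Context {R : realType}.

Lemma ge0_of_derive_ge0 (f df : R -> R) :
  (forall x : R, is_derive x (1 : R) f (df x)) -> (forall x, 0 <= x -> 0 <= df x) ->
  0 <= f 0 -> forall x, 0 <= x -> 0 <= f x.
Proof.
move=> f_df df_ge0 f0_ge0 x x_ge0.
have f_cont : continuous f.
  by move=> y; apply/differentiable_continuous/derivable1_diffP/ex_derive.
have [c] := MVT_segment x_ge0 (fun y _ => f_df y) (continuous_subspaceT f_cont).
rewrite in_itv /= => /andP[c_ge0 _] f_incr.
have : 0 <= f x - f 0 by rewrite f_incr subr0 mulr_ge0 // df_ge0.
lra.
Qed.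

Lemma sin_le_id (x : R) : 0 <= x -> sin x <= x.
Proof.
move=> x_ge0; rewrite -subr_ge0.
apply: (@ge0_of_derive_ge0 (fun y => y - sin y) (fun y => 1 - cos y)).
- by move=> y _; rewrite subr_ge0 cos_le1.
- by rewrite sin0 subr0.
- done.
Qed.

Lemma cos_ge_taylor2 (x : R) : 0 <= x -> 1 - x ^+ 2 / 2 <= cos x.
Proof.
move=> x_ge0; rewrite -subr_ge0.
apply: (@ge0_of_derive_ge0 (fun y => cos y - (1 - y ^+ 2 / 2))
                             (fun y => y - sin y)).
- by move=> y; apply: is_derive_eq; rewrite /GRing.scale /=; lra.
- by move=> y y_ge0; rewrite subr_ge0 sin_le_id.
- by rewrite cos0 expr0n /= mul0r subr0 subrr.
- done.
Qed.

Lemma sin_ge_taylor3 (x : R) : 0 <= x -> x - x ^+ 3 / 6 <= sin x.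
Proof.
move=> x_ge0; rewrite -subr_ge0.
apply: (@ge0_of_derive_ge0 (fun y => sin y - (y - y ^+ 3 / 6))
                             (fun y => cos y - (1 - y ^+ 2 / 2))).
- move=> y; apply: is_derive_eq.
  by rewrite /GRing.scale /= !mulr0 add0r !mulr1; field.
- by move=> y y_ge0; rewrite subr_ge0 cos_ge_taylor2.
- by rewrite sin0 expr0n /= mul0r subr0 subrr.
- done.
Qed.

Lemma one_sub_cos_le (r : R) : 0 <= r -> 1 - cos r <= r.
Proof.
move=> r_ge0; have := cos_ge_taylor2 r r_ge0; have := cos_geN1 r.
have [r_le2|r_gt2] := leP r 2; nra.
Qed.

(* ... and at least quadratic in r on [0, pi], via 1 - cos r = 2 sin^2 (r/2)
   and sin y >= y/3 for y in [0, 2]. *)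
Lemma one_sub_cos_ge (r : R) : 0 <= r <= pi -> r ^+ 2 / 18 <= 1 - cos r.
Proof.
move=> /andP[r_ge0 r_lepi]; set y := r / 2.
have r_y : r = y *+ 2 by rewrite /y -mulr_natr mulfVK // pnatr_eq0.
have y_ge0 : 0 <= y by rewrite /y divr_ge0.
have y_le2 : y <= 2.
  have := @pihalf_lt2 R; have : r / 2 <= pi / 2 by rewrite ler_pM2r ?invr_gt0.
  rewrite /y; lra.
have sin_y : y / 3 <= sin y by have := sin_ge_taylor3 y y_ge0; nra.
rewrite r_y cos_mulr2n; have := sin2cos2 y; nra.
Qed.

End TrigBounds.

(* The squared Hellinger--Kantorovich distance written in the square roots
   a = sqrt h1, b = sqrt h2 of the masses and the distance r of the points. *)
Definition hk2 {R : realType} (a b r : R) : R :=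
  if r <= pi then a ^+ 2 + b ^+ 2 - 2 * (a * b) * cos r
  else a ^+ 2 + b ^+ 2 + 2 * (a * b).

Section ReducedHK.
Context {R : realType}.
Implicit Types a b r x y D : R.

Lemma hk2_sym a b r : hk2 a b r = hk2 b a r.
Proof. by rewrite /hk2 (addrC (a ^+ 2)) (mulrC a). Qed.

Lemma hk2_near a b r : r <= pi -> hk2 a b r = (a - b) ^+ 2 + 2 * (a * b) * (1 - cos r).
Proof. by rewrite /hk2 => ->; ring. Qed.

Lemma hk2_far a b r : ~~ (r <= pi) -> hk2 a b r = (a + b) ^+ 2.
Proof. by rewrite /hk2 => /negbTE ->; ring. Qed.

Lemma sqr_sub_le_hk2 a b r : 0 <= a -> 0 <= b -> (a - b) ^+ 2 <= hk2 a b r.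
Proof.
move=> a_ge0 b_ge0; have ab_ge0 : 0 <= a * b by rewrite mulr_ge0.
have [r_lepi|r_gtpi] := boolP (r <= pi).
  by rewrite hk2_near // lerDl; have := cos_le1 r; nra.
by rewrite hk2_far //; nra.
Qed.

Lemma hk2_ge0 a b r : 0 <= a -> 0 <= b -> 0 <= hk2 a b r.
Proof.
by move=> a_ge0 b_ge0; exact: le_trans (sqr_ge0 _) (sqr_sub_le_hk2 a b r a_ge0 b_ge0).
Qed.

Lemma dist_sqrt_le_hk a b r : 0 <= a -> 0 <= b -> `|a - b| <= Num.sqrt (hk2 a b r).
Proof.
by move=> a_ge0 b_ge0; rewrite -sqrtr_sqr ler_sqrt ?hk2_ge0 ?sqr_sub_le_hk2.
Qed.

Lemma mul_sqr_dist_le_hk2 a b r : 0 <= a -> 0 <= b -> 0 <= r <= pi ->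
  a * b * r ^+ 2 <= 9 * hk2 a b r.
Proof.
move=> a_ge0 b_ge0 /andP[r_ge0 r_lepi]; rewrite hk2_near //.
have /one_sub_cos_ge : 0 <= r <= pi by rewrite r_ge0.
have : 0 <= (a - b) ^+ 2 by rewrite sqr_ge0.
have : 0 <= a * b by rewrite mulr_ge0.
nra.
Qed.

(* The lower estimate: if the values D of the flat functional on the test
   functions +-1 and +-min(1, |x - gamma_i|) dominate the four quantities
   below, then HK^2 <= 5 D. *)
Lemma hk2_le_of_tests a b r D : 0 <= a -> 0 <= b -> 0 <= r ->
  a ^+ 2 - b ^+ 2 <= D -> b ^+ 2 - a ^+ 2 <= D ->
  a ^+ 2 * Num.min 1 r <= D -> b ^+ 2 * Num.min 1 r <= D -> hk2 a b r <= 5 * D.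
Proof.
move=> a_ge0 b_ge0 r_ge0 Da Db Dra Drb.
have ab_ge0 : 0 <= a * b by rewrite mulr_ge0.
have amgm : 2 * (a * b) <= a ^+ 2 + b ^+ 2 by have := sqr_ge0 (a - b); nra.
have sqr_sub : (a - b) ^+ 2 <= D by have [|] := leP b a; nra.
have [r_lepi|r_gtpi] := boolP (r <= pi); last first.
  have r_ge1 : 1 <= r by have := @pi_ge2 R; rewrite -ltNge in r_gtpi; lra.
  rewrite (min_l r_ge1) !mulr1 in Dra Drb.
  by rewrite hk2_far //; nra.
rewrite hk2_near //.
suff : 2 * (a * b) * (1 - cos r) <= 4 * D by lra.
have cos_lin := one_sub_cos_le r r_ge0; have cos_ge := cos_geN1 r; have cos_le := cos_le1 r.
have [r_le1|r_gt1] := leP r 1.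
  rewrite (min_r r_le1) in Dra Drb.
  have : 2 * (a * b) * (1 - cos r) <= (a ^+ 2 + b ^+ 2) * r by apply: ler_pM; lra.
  nra.
rewrite (min_l (ltW r_gt1)) !mulr1 in Dra Drb.
have : 2 * (a * b) * (1 - cos r) <= (a ^+ 2 + b ^+ 2) * 2 by apply: ler_pM; lra.
nra.
Qed.

Lemma sqr_mul_dist_le a b r : 0 <= b -> b <= a -> 0 <= r <= pi ->
  b ^+ 2 * r <= 3 * Num.sqrt (a ^+ 2 + b ^+ 2) * Num.sqrt (hk2 a b r).
Proof.
move=> b_ge0 b_lea r_bnd; have a_ge0 := le_trans b_ge0 b_lea.
have /andP[r_ge0 _] := r_bnd.
have sum_ge0 : 0 <= a ^+ 2 + b ^+ 2 by rewrite addr_ge0 ?sqr_ge0.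
have hk_ge0 := hk2_ge0 a b r a_ge0 b_ge0.
set S := Num.sqrt _; set H := Num.sqrt _.
have S_ge0 : 0 <= S by rewrite sqrtr_ge0.
have H_ge0 : 0 <= H by rewrite sqrtr_ge0.
have SS : S ^+ 2 = a ^+ 2 + b ^+ 2 by rewrite sqr_sqrtr.
have HH : H ^+ 2 = hk2 a b r by rewrite sqr_sqrtr.
have transport := mul_sqr_dist_le_hk2 a b r a_ge0 b_ge0 r_bnd.
have sqr_le : (b ^+ 2 * r) ^+ 2 <= (3 * S * H) ^+ 2.
  have -> : (b ^+ 2 * r) ^+ 2 = b ^+ 2 * (b * b * r ^+ 2) by ring.
  have -> : (3 * S * H) ^+ 2 = S ^+ 2 * (9 * H ^+ 2) by ring.
  apply: ler_pM; rewrite ?sqr_ge0 ?mulr_ge0 ?sqr_ge0 // ?SS ?HH ?lerDr ?sqr_ge0 //.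
  by apply: le_trans transport; rewrite ler_wpM2r ?sqr_ge0 // ler_wpM2r.
have : 0 <= 3 * S * H by rewrite !mulr_ge0.
have : 0 <= b ^+ 2 * r by rewrite mulr_ge0 ?sqr_ge0.
nra.
Qed.

(* The upper estimate when the first point carries the larger mass: a test
   value a^2 x - b^2 y with |x|, |y| <= 1 and x - y <= r splits into the mass
   defect (a^2 - b^2) x and the transport term b^2 (x - y). *)
Lemma hk2_upper_ordered a b r x y : 0 <= b -> b <= a -> 0 <= r ->
  `|x| <= 1 -> `|y| <= 1 -> x - y <= r ->
  a ^+ 2 * x - b ^+ 2 * y <=
    5 * Num.sqrt (a ^+ 2 + b ^+ 2) * Num.sqrt (hk2 a b r).
Proof.
move=> b_ge0 b_lea r_ge0; rewrite !ler_norml => /andP[x_ge x_le] /andP[y_ge y_le] xy.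
have a_ge0 := le_trans b_ge0 b_lea.
set S := Num.sqrt _; set H := Num.sqrt _.
have S_ge0 : 0 <= S by rewrite sqrtr_ge0.
have SS : S ^+ 2 = a ^+ 2 + b ^+ 2 by rewrite sqr_sqrtr // addr_ge0 ?sqr_ge0.
have a_leS : a <= S by nra.
have b_leS : b <= S by nra.
have [r_lepi|r_gtpi] := boolP (r <= pi); last first.
  have -> : H = a + b by rewrite /H hk2_far // sqrtr_sqr ger0_norm ?addr_ge0.
  nra.
have defect : a ^+ 2 - b ^+ 2 <= 2 * S * H.
  have := dist_sqrt_le_hk a b r a_ge0 b_ge0; rewrite -/H ger0_norm ?subr_ge0 //.
  have -> : a ^+ 2 - b ^+ 2 = (a - b) * (a + b) by ring.
  have : 0 <= a - b by rewrite subr_ge0.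
  nra.
have transport : b ^+ 2 * r <= 3 * S * H.
  by apply: sqr_mul_dist_le => //; rewrite r_ge0.
have split_test : a ^+ 2 * x - b ^+ 2 * y = b ^+ 2 * (x - y) + (a ^+ 2 - b ^+ 2) * x.
  by ring.
have : 0 <= a ^+ 2 - b ^+ 2 by rewrite subr_ge0 ler_sqr ?nnegrE.
have : 0 <= b ^+ 2 by rewrite sqr_ge0.
nra.
Qed.

(* The upper estimate in general, by symmetry of HK. *)
Lemma hk2_upper a b r x y : 0 <= a -> 0 <= b -> 0 <= r ->
  `|x| <= 1 -> `|y| <= 1 -> `|x - y| <= r ->
  a ^+ 2 * x - b ^+ 2 * y <=
    5 * Num.sqrt (a ^+ 2 + b ^+ 2) * Num.sqrt (hk2 a b r).
Proof.
move=> a_ge0 b_ge0 r_ge0 x_le1 y_le1; rewrite ler_norml => /andP[yx xy].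
have [b_lea|a_ltb] := leP b a; first exact: hk2_upper_ordered.
have -> : a ^+ 2 * x - b ^+ 2 * y = b ^+ 2 * - y - a ^+ 2 * - x by ring.
rewrite hk2_sym (addrC (a ^+ 2)).
by apply: hk2_upper_ordered; rewrite ?normrN // ?(ltW a_ltb) //; lra.
Qed.

End ReducedHK.

(* Elementary properties of the Euclidean norm on row vectors
   (the library's norm on matrices is the sup norm). *)
Section Euclidean.
Context {R : realType} {d : nat}.
Implicit Types u v : 'rV[R]_d.

Lemma eucl_ge0 v : 0 <= eucl v.
Proof. exact: sqrtr_ge0. Qed.

Lemma eucl_sqr v : eucl v ^+ 2 = \sum_(i < d) v ord0 i ^+ 2.
Proof. by rewrite sqr_sqrtr // sumr_ge0 // => i _; rewrite sqr_ge0. Qed.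

Lemma euclN v : eucl (- v) = eucl v.
Proof. by rewrite /eucl; congr Num.sqrt; apply: eq_bigr => i _; rewrite mxE sqrrN. Qed.

Lemma eucl_distC u v : eucl (u - v) = eucl (v - u).
Proof. by rewrite -euclN opprB. Qed.

Lemma eucl0 : eucl (0 : 'rV[R]_d) = 0.
Proof. by rewrite /eucl big1 ?sqrtr0 // => i _; rewrite mxE expr0n. Qed.

Lemma eucl_eq0 v : eucl v = 0 -> forall i, v ord0 i = 0.
Proof.
move=> v0 i; have : \sum_(j < d) v ord0 j ^+ 2 = 0 by rewrite -eucl_sqr v0 expr0n.
move/psumr_eq0P => /(_ (fun j _ => sqr_ge0 _) i isT) /eqP.
by rewrite sqrf_eq0 => /eqP.
Qed.

(* Cauchy--Schwarz, from 2 s t A B <= s^2 B^2 + t^2 A^2 summed over the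
   coordinates, where A and B are the two norms. *)
Lemma eucl_cauchy_schwarz u v :
  \sum_(i < d) u ord0 i * v ord0 i <= eucl u * eucl v.
Proof.
set A := eucl u; set B := eucl v.
have [A0|A0] := eqVneq A 0.
  by rewrite big1 ?A0 ?mul0r // => i _; rewrite (eucl_eq0 u A0) mul0r.
have [B0|B0] := eqVneq B 0.
  by rewrite big1 ?B0 ?mulr0 // => i _; rewrite (eucl_eq0 v B0) mulr0.
have AB_gt0 : 0 < A * B by rewrite mulr_gt0 // lt_def ?A0 ?B0 eucl_ge0.
have : (\sum_(i < d) u ord0 i * v ord0 i) * (2 * A * B) <=
       \sum_(i < d) (u ord0 i ^+ 2 * B ^+ 2 + v ord0 i ^+ 2 * A ^+ 2).
  rewrite mulr_suml; apply: ler_sum => i _.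
  by have := sqr_ge0 (u ord0 i * B - v ord0 i * A); nra.
rewrite big_split /= -!mulr_suml -!eucl_sqr -/A -/B.
nra.
Qed.

Lemma eucl_triangle u v : eucl (u + v) <= eucl u + eucl v.
Proof.
have sqr_le : eucl (u + v) ^+ 2 <= (eucl u + eucl v) ^+ 2.
  rewrite eucl_sqr (eq_bigr (fun i => u ord0 i ^+ 2 + v ord0 i ^+ 2 +
                                      2 * (u ord0 i * v ord0 i))); last first.
    by move=> i _; rewrite mxE; ring.
  rewrite !big_split /= -mulr_sumr -!eucl_sqr.
  by have := eucl_cauchy_schwarz u v; lra.
have := eucl_ge0 (u + v); have := eucl_ge0 u; have := eucl_ge0 v.
nra.
Qed.

Lemma eucl_dist_lip u v g : `|eucl (u - g) - eucl (v - g)| <= eucl (u - v).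
Proof.
have := eucl_triangle (u - v) (v - g); have := eucl_triangle (v - u) (u - g).
rewrite !addrA !subrK (eucl_distC v u) ler_norml.
by move=> h1 h2; apply/andP; split; lra.
Qed.

Lemma eucl_dist_continuous g : continuous (fun x : 'rV[R]_d => eucl (x - g)).
Proof.
move=> x; apply: (@continuous_comp _ _ _
    (fun x : 'rV[R]_d => \sum_(i < d) (x - g) ord0 i ^+ 2) Num.sqrt);
  last exact: sqrt_continuous.
apply: (@continuous_big _ _ +%R 0 xpredT add_continuous _ _
   (fun i (x : 'rV[R]_d) => (x - g) ord0 i ^+ 2)) => i _ y.
have coord_cont : {for y, continuous (fun z : 'rV[R]_d => (z - g) ord0 i)}.
  apply: (@continuous_comp _ _ _ (fun z : 'rV[R]_d => z - g)
                                   (fun M : 'rV[R]_d => M ord0 i)).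
    by apply: continuousB; [exact: cvg_id | exact: cst_continuous].
  exact: coord_continuous.
have -> : (fun z : 'rV_d => (z - g) ord0 i ^+ 2) =
          (fun z => (z - g) ord0 i * (z - g) ord0 i) by apply/funext => z.
exact: continuousM.
Qed.

End Euclidean.

(* The truncated cone s min(1, |x - g|): together with the constants +-1
   these test functions realise the flat distance up to a constant. *)
Definition cone_test {R : realType} {d : nat} (s : R) (g : 'rV[R]_d)
    (x : 'rV[R]_d) : R :=
  s * Num.min 1 (eucl (x - g)).

Lemma min1_lip {R : realType} (a b : R) :
  `|Num.min 1 a - Num.min 1 b| <= `|a - b|.
Proof.
have [a_le1|a_gt1] := leP a 1; have [b_le1|b_gt1] := leP b 1.
- by [].
- by rewrite distrC [X in _ <= X]distrC !ger0_norm ?subr_ge0; lra.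
- by rewrite !ger0_norm ?subr_ge0; lra.
- by rewrite subrr normr0.
Qed.

Lemma min1_bounds {R : realType} (a : R) : 0 <= a -> 0 <= Num.min 1 a <= 1.
Proof.
move=> a_ge0; have [a_le1|_] := leP a 1; first by rewrite a_ge0 a_le1.
by rewrite ler01 lexx.
Qed.

Section FlatDistance.
Context {R : realType} {d : nat} (V : set 'rV[R]_d).
Implicit Types (p q : R * 'rV[R]_d) (phi : 'rV[R]_d -> R).

Lemma cone_flat_test (s : R) g : `|s| <= 1 -> flat_test V (cone_test s g).
Proof.
move=> s_le1; split.
- apply: continuous_subspaceT => x.
  have min_cont : {for x, continuous (fun y : 'rV[R]_d => Num.min 1 (eucl (y - g)))}.
    by have := @continuous_min R 'rV[R]_d (fun=> 1) (fun y => eucl (y - g)) x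
                (@cst_continuous 'rV[R]_d R 1 x) (eucl_dist_continuous g x).
  exact: continuousM (@cst_continuous 'rV[R]_d R s x) min_cont.
- move=> x _; have /andP[m_ge0 m_le1] := min1_bounds _ (eucl_ge0 (x - g)).
  by rewrite /cone_test normrM (ger0_norm m_ge0); have := normr_ge0 s; nra.
- move=> x y _ _; rewrite /cone_test -mulrBr normrM -[eucl (x - y)]mul1r.
  apply: ler_pM => //; exact: le_trans (min1_lip _ _) (eucl_dist_lip _ _ _).
Qed.

Lemma const_flat_test (c : R) : `|c| <= 1 -> flat_test V (fun=> c).
Proof.
move=> c_le1; split => //.
- by apply: continuous_subspaceT => x; exact: cst_continuous.
- by move=> x y _ _; rewrite subrr normr0 eucl_ge0.
Qed.

(* Every test function gives a lower bound on d_F; the supremum is finite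
   since each test value is at most h1 + h2. *)
Lemma flat_dist_ge p q phi : inCV V p -> inCV V q -> flat_test V phi ->
  p.1 * phi p.2 - q.1 * phi q.2 <= flat_dist V p q.
Proof.
move=> [hp gp] [hq gq] phi_test.
apply: ub_le_sup; last by exists phi.
exists (p.1 + q.1) => _ [psi [[_ psi_le1 _] ->]].
have := psi_le1 _ gp; have := psi_le1 _ gq; rewrite !ler_norml.
move=> /andP[? ?] /andP[? ?]; nra.
Qed.

Lemma flat_dist_le p q (B : R) :
  (forall phi, flat_test V phi -> p.1 * phi p.2 - q.1 * phi q.2 <= B) ->
  flat_dist V p q <= B.
Proof.
move=> test_le; apply: ge_sup; last by move=> _ [phi [phi_test ->]]; apply: test_le.
exists (p.1 * 0 - q.1 * 0), (fun=> 0); split => //.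
by apply: const_flat_test; rewrite normr0.
Qed.

End FlatDistance.

Section Comparison.
Context {R : realType} {d : nat} (V : set 'rV[R]_d).
Implicit Types p q : R * 'rV[R]_d.

Lemma HK2_hk2 p q : 0 <= p.1 -> 0 <= q.1 ->
  HK2 p q = hk2 (Num.sqrt p.1) (Num.sqrt q.1) (eucl (p.2 - q.2)).
Proof. by move=> hp hq; rewrite /HK2 /hk2 sqrtrM // !sqr_sqrtr. Qed.

Lemma HK2_le_flat_dist p q : inCV V p -> inCV V q -> HK2 p q <= 5 * flat_dist V p q.
Proof.
move=> Vp Vq; have [hp _] := Vp; have [hq _] := Vq.
have test phi := flat_dist_ge V p q phi Vp Vq.
have unit : `|1 : R| <= 1 by rewrite normr1.
have unitN : `|-1 : R| <= 1 by rewrite normrN normr1.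
rewrite HK2_hk2 //; apply: hk2_le_of_tests; rewrite ?sqrtr_ge0 ?eucl_ge0 ?sqr_sqrtr //.
- by have := test _ (const_flat_test V 1 unit); rewrite !mulr1.
- by have := test _ (const_flat_test V (-1) unitN); lra.
- have := test _ (cone_flat_test V 1 q.2 unit).
  by rewrite /cone_test subrr eucl0 (min_r ler01); nra.
- have := test _ (cone_flat_test V (-1) p.2 unitN).
  by rewrite /cone_test subrr eucl0 (min_r ler01) (eucl_distC q.2); nra.
Qed.

Lemma flat_dist_le_HK p q : inCV V p -> inCV V q ->
  flat_dist V p q <= 5 * Num.sqrt (p.1 + q.1) * HK p q.
Proof.
move=> [hp Vp] [hq Vq]; apply: flat_dist_le => phi [_ phi_le1 phi_lip].
have := hk2_upper _ _ _ _ _ (sqrtr_ge0 p.1) (sqrtr_ge0 q.1)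
  (eucl_ge0 (p.2 - q.2)) (phi_le1 _ Vp) (phi_le1 _ Vq) (phi_lip _ _ Vp Vq).
by rewrite /HK HK2_hk2 // !sqr_sqrtr.
Qed.

(* HK controls the difference of the square roots of the masses; this keeps
   the masses bounded on HK-balls. *)
Lemma sqrt_mass_dist_le_HK p q : 0 <= p.1 -> 0 <= q.1 ->
  `|Num.sqrt p.1 - Num.sqrt q.1| <= HK p q.
Proof. by move=> hp hq; rewrite /HK HK2_hk2 // dist_sqrt_le_hk ?sqrtr_ge0. Qed.

End Comparison.

Section Topology.
Context {R : realType} {d : nat} (V : set 'rV[R]_d).
Implicit Types p q : R * 'rV[R]_d.

Lemma open_in_CV_transfer (D1 D2 : R * 'rV[R]_d -> R * 'rV[R]_d -> R)
    (U : set (R * 'rV[R]_d)) :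
  (forall p e, inCV V p -> 0 < e -> exists2 delta : R, 0 < delta &
     forall q, inCV V q -> D2 p q < delta -> D1 p q < e) ->
  open_in_CV V D1 U -> open_in_CV V D2 U.
Proof.
move=> small [U_sub U_open]; split => // p Up.
have [e e_gt0 ball_in_U] := U_open p Up.
have [delta delta_gt0 ball_in_ball] := small p e (U_sub p Up) e_gt0.
by exists delta => // q Vq Dq; apply: ball_in_U => //; apply: ball_in_ball.
Qed.

Lemma HK_small_of_flat_small p e : inCV V p -> 0 < e ->
  exists2 delta : R, 0 < delta &
    forall q, inCV V q -> flat_dist V p q < delta -> HK p q < e.
Proof.
move=> Vp e_gt0; exists (e ^+ 2 / 5); first by rewrite divr_gt0 // exprn_gt0.
move=> q Vq dist_lt; have := HK2_le_flat_dist V p q Vp Vq.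
rewrite /HK -(ger0_norm (ltW e_gt0)) -sqrtr_sqr ltr_sqrt ?exprn_gt0 //.
lra.
Qed.

Lemma mass_le_of_HK_lt1 p q : inCV V p -> inCV V q -> HK p q < 1 ->
  q.1 <= (Num.sqrt p.1 + 1) ^+ 2.
Proof.
move=> [hp _] [hq _] HK_lt1; have := sqrt_mass_dist_le_HK p q hp hq.
rewrite ler_norml => /andP[close _].
by rewrite -(sqr_sqrtr hq) ler_sqr ?nnegrE ?addr_ge0 ?sqrtr_ge0 //; lra.
Qed.

(* Small HK forces small flat distance, since d_F <= 5 sqrt (h1 + h2) H and
   h1 + h2 stays bounded by K^2 on the HK-ball of radius 1 around p. *)
Lemma flat_small_of_HK_small p e : inCV V p -> 0 < e ->
  exists2 delta : R, 0 < delta &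
    forall q, inCV V q -> HK p q < delta -> flat_dist V p q < e.
Proof.
move=> Vp e_gt0; have [hp _] := Vp.
set K := Num.sqrt (p.1 + (Num.sqrt p.1 + 1) ^+ 2).
have K_ge0 : 0 <= K by rewrite sqrtr_ge0.
have M_gt0 : 0 < 5 * K + 1 by lra.
exists (Num.min 1 (e / (5 * K + 1))); first by rewrite lt_min ltr01 divr_gt0.
move=> q Vq; rewrite lt_min => /andP[HK_lt1 HK_lt]; have [hq _] := Vq.
have mass_le_K : Num.sqrt (p.1 + q.1) <= K.
  by rewrite ler_sqrt ?addr_ge0 ?sqr_ge0 // lerD2l mass_le_of_HK_lt1.
have HK_ge0 : 0 <= HK p q by rewrite sqrtr_ge0.
have := flat_dist_le_HK V p q Vp Vq; rewrite ltr_pdivlMr // in HK_lt.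
have : 0 <= Num.sqrt (p.1 + q.1) by rewrite sqrtr_ge0.
nra.
Qed.

End Topology.

Theorem propositionA6 (R : realType) (d : nat) (V : set 'rV[R]_d)
    (hV : closure_of_bounded_domain V) :
  (exists2 C : R, 0 < C &
     forall p1 p2 : R * 'rV[R]_d, inCV V p1 -> inCV V p2 ->
       C^-1 * HK2 p1 p2 <= flat_dist V p1 p2 /\
       flat_dist V p1 p2 <= C * Num.sqrt (p1.1 + p2.1) * HK p1 p2) /\
  (forall U : set (R * 'rV[R]_d),
     open_in_CV V HK U <-> open_in_CV V (flat_dist V) U).
Proof.
split.
  exists 5 => // p1 p2 Vp1 Vp2; split; last exact: flat_dist_le_HK.
  by have := HK2_le_flat_dist V p1 p2 Vp1 Vp2; lra.
move=> U; split; apply: open_in_CV_transfer => p e Vp e_gt0.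
- exact: HK_small_of_flat_small.
- exact: flat_small_of_HK_small.
Qed.
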